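(* Let $F\in\mathcal{Q}$ and define $\lambda=(\lambda_i)_{i\in\mathbb{Z}_{\ge0}}$ by $\lambda_i=2^{-F(i)}$. Let $k\in\mathbb{Z}_{\ge0}$, let $P_0,\dots,P_k$ be subsets of $\mathbb{Q}_{\ge0}$, and let $S\subseteq\mathbb{Q}_{\ge0}$. Assume there exist $a,b_0,\dots,b_k\in[0,\infty)$ such that (I) $a<b_i$ for all $i\in\{0,\dots,k\}$; (II) $b_i\neq b_j$ for $i\neq j$; (III) $S\cap P_i=[a,b_i)\cap\mathbb{Q}_{\ge0}$ for all $i\in\{0,\dots,k\}$. Then the $k+2$ real numbers $\langle\lambda,P_0\rangle,\dots,\langle\lambda,P_k\rangle,1$ are linearly independent over $\mathbb{Q}$.
   Context: Fix a bijection $Q\colon\mathbb{Z}_{\ge0}\to\mathbb{Q}_{\ge0}$. For a summable sequence $\alpha=(a_i)_{i\in\mathbb{Z}_{\ge0}}$ of positive reals and $B\subseteq\mathbb{Q}_{\ge0}$, put $\langle\alpha,B\rangle=\sum_{i:\,Q(i)\in B}a_i$, with $\langle\alpha,\emptyset\rangle=0$. $\mathcal{Q}$ denotes the set of all strictly increasing maps $F\colon\mathbb{Z}_{\ge0}\to\mathbb{Z}_{\ge0}$ such that $\lim_{n\to\infty}(F(n+1)-F(n))=\infty$ and $\lim_{n\to\infty}\sum_{m=n+1}^{\infty}2^{F(n)-F(m)}=0$. *)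

From HB Require Import structures.
From mathcomp Require Import all_boot all_order all_algebra.
From mathcomp Require Import all_classical all_reals all_analysis.
Set Implicit Arguments. Unset Strict Implicit. Unset Printing Implicit Defensive.
Import Order.TTheory GRing.Theory Num.Theory numFieldNormedType.Exports.
Local Open Scope classical_set_scope.
Local Open Scope ring_scope.

Definition nonneg_rat_bij (Q : nat -> rat) : Prop :=
  [/\ forall i, 0 <= Q i, injective Q & forall q : rat, 0 <= q -> exists i, Q i = q].

Definition pairing (R : realType) (Q : nat -> rat) (alpha : nat -> R) (B : set rat) : R :=
  limn (series (fun i => if Q i \in B then alpha i else 0)).

Definition in_calQ (R : realType) (F : nat -> nat) : Prop :=
  [/\ (forall n m, (n < m)%N -> (F n < F m)%N),
      (forall M : nat, exists N : nat, forall n, (N <= n)%N -> (M <= F n.+1 - F n)%N)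
    & (fun n => limn (fun N => \sum_(n.+1 <= m < N)
                       (2 : R) ^ ((F n)%:Z - (F m)%:Z))) @ \oo --> (0 : R)].

Definition lambda_of (R : realType) (F : nat -> nat) : nat -> R :=
  fun i => (2 : R) ^- (F i).

From HB Require Import structures.
From mathcomp Require Import all_boot all_order all_algebra.
From mathcomp Require Import all_classical all_reals all_analysis.
Import Order.TTheory GRing.Theory Num.Theory numFieldNormedType.Exports.
Local Open Scope classical_set_scope.
Local Open Scope ring_scope.

(* After clearing denominators, a vanishing rational combination yields integer
   weights w_i with sum_n d_n 2^-F(n) = -w_(k+1), where d_n is the sum of the w_i
   over the i <= k with Q(n) in P_i; d is a bounded integer sequence.  Multiplying
   the n-th remainder of this series by 2^F(n) gives an integer of size at most a
   constant times sum_(m>n) 2^(F(n)-F(m)), which tends to 0 because F is in calQ;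
   so d_n = 0 for all large n.  On the other hand the sets S /\ P_i are nested
   intervals [a, b_i) with distinct right ends, so if some w_i (i <= k) were
   nonzero, arbitrarily late rationals Q(n) would lie in exactly one weighted P_i,
   giving d_n = w_i <> 0. *)

Lemma leq_incr_id (f : nat -> nat) :
  {homo f : n m / (n < m)%N} -> forall n, (n <= f n)%N.
Proof. by move=> f_incr; elim=> // n IHn; exact: leq_ltn_trans IHn (f_incr _ _ (ltnSn n)). Qed.

Lemma int_norm_lt1_eq0 {R : archiNumDomainType} {x : R} :
  x \is a Num.int -> `|x| < 1 -> x = 0.
Proof.
move=> /intrP[z ->]; rewrite -intr_norm (_ : 1 = 1%:~R) // ltr_int.
by rewrite -(add0r 1) ltzD1 normr_le0 => /eqP ->.
Qed.

Lemma rpred_ratr_int {R : archiNumFieldType} (x : rat) :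
  x \is a Num.int -> (ratr x : R) \is a Num.int.
Proof. by move=> /intrP[z ->]; rewrite ratr_int rpred_int. Qed.

Lemma norm_series_tail_le (R : realType) (g v : nat -> R) (l L B : R) n :
  series g @ \oo --> l -> series v @ \oo --> L ->
  (forall m, `|g m| <= B * v m) ->
  `|l - series g n| <= B * (L - series v n).
Proof.
move=> gl vL gv.
have lhs : (fun N => `|series g N - series g n|) @ \oo --> `|l - series g n|.
  by apply: cvg_norm; apply: cvgB => //; exact: cvg_cst.
have rhs : (fun N => B * (series v N - series v n)) @ \oo --> B * (L - series v n).
  by apply: cvgMl_tmp; apply: cvgB => //; exact: cvg_cst.
apply: (ler_cvg_to lhs rhs).
near=> N; have nN : (n <= N)%N by near: N; exact: nbhs_infty_ge.
rewrite !sub_series_geq // mulr_sumr.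
by apply: le_trans (ler_norm_sum _ _ _) _; apply: ler_sum => m _.
Unshelve. all: by end_near.
Qed.

Section LacunarySeries.
Context {R : realType} {F : nat -> nat}.
Hypothesis F_incr : {homo F : n m / (n < m)%N}.
Local Notation lambda := (lambda_of R F).

Lemma lambda_ge0 n : 0 <= lambda n.
Proof. by rewrite invr_ge0 exprn_ge0. Qed.

Lemma is_cvg_series_lambda : cvgn (series lambda).
Proof.
apply: (@series_le_cvg _ _ (geometric 1 2^-1)) => [n|n|n|].
- exact: lambda_ge0.
- by rewrite /geometric /= mul1r exprn_ge0 // invr_ge0.
- rewrite /geometric /lambda_of /= mul1r exprVn lef_pV2 ?posrE ?exprn_gt0 //.
  by rewrite ler_weXn2l ?ler1n // leq_incr_id.
- by apply: is_cvg_geometric_series; rewrite gtr0_norm ?invr_lt1 ?ltr1n ?invr_gt0 // unitfE.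
Qed.

Local Notation Lambda := (limn (series lambda)).

Lemma scaled_partial_sum_int (d : nat -> R) n :
  (forall m, d m \is a Num.int) ->
  2^+F n * series (fun m => d m * lambda m) n.+1 \is a Num.int.
Proof.
move=> d_int; rewrite /series /= big_mkord mulr_sumr rpred_sum // => m.
have Fmn : (F m <= F n)%N by apply: ltnW_homo; rewrite // -ltnS.
rewrite mulrCA rpredM // /lambda_of -exprB ?unitfE ?pnatr_eq0 //.
by rewrite rpredX // rpred_nat.
Qed.

Lemma tail_weight_cvg n :
  (fun N => \sum_(n.+1 <= m < N) (2 : R) ^ ((F n)%:Z - (F m)%:Z)) @ \oo
    --> 2^+F n * (Lambda - series lambda n.+1).
Proof.
have limit : (fun N => 2^+F n * (series lambda N - series lambda n.+1)) @ \oo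
    --> 2^+F n * (Lambda - series lambda n.+1).
  by apply: cvgMl_tmp; apply: cvgB; [exact: is_cvg_series_lambda | exact: cvg_cst].
apply: cvg_trans limit; apply: near_eq_cvg.
near=> N; have nN : (n.+1 <= N)%N by near: N; exact: nbhs_infty_ge.
rewrite sub_series_geq // mulr_sumr; apply: eq_bigr => m _.
by apply/esym; rewrite expfzDr ?pnatr_eq0 // -exprnN.
Unshelve. all: by end_near.
Qed.

Lemma calQ_tail_cvg0 :
  (fun n => limn (fun N => \sum_(n.+1 <= m < N) (2 : R) ^ ((F n)%:Z - (F m)%:Z)))
    @ \oo --> 0 ->
  (fun n => 2^+F n * (Lambda - series lambda n.+1)) @ \oo --> 0.
Proof.
suff -> : (fun n => 2^+F n * (Lambda - series lambda n.+1)) =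
  (fun n => limn (fun N => \sum_(n.+1 <= m < N) (2 : R) ^ ((F n)%:Z - (F m)%:Z))) by [].
by apply/funext => n; rewrite (cvg_lim _ (tail_weight_cvg n)).
Qed.

Hypothesis tail_cvg0 :
  (fun n => 2^+F n * (Lambda - series lambda n.+1)) @ \oo --> (0 : R).

Lemma lacunary_int_series_eventually0 {d : nat -> R} {B p : R} :
  (forall n, d n \is a Num.int) -> (forall n, `|d n| <= B) -> p \is a Num.int ->
  series (fun n => d n * lambda n) @ \oo --> p ->
  exists N, forall n, (N < n)%N -> d n = 0.
Proof.
move=> d_int dB p_int; set g := (fun n => _) => gp.
have remainder_int n : 2^+F n * (p - series g n.+1) \is a Num.int.
  by rewrite mulrBr rpredB ?scaled_partial_sum_int // rpredM // rpredX // rpred_nat.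
have remainder_le n :
    `|2^+F n * (p - series g n.+1)| <= B * (2^+F n * (Lambda - series lambda n.+1)).
  rewrite normrM ger0_norm ?exprn_ge0 // mulrCA ler_wpM2l ?exprn_ge0 //.
  apply: norm_series_tail_le gp is_cvg_series_lambda _ => m.
  by rewrite normrM [`|lambda m|]ger0_norm ?lambda_ge0 // ler_wpM2r ?lambda_ge0.
have remainder_small : \forall n \near \oo, B * (2^+F n * (Lambda - series lambda n.+1)) < 1.
  by apply: (cvgr_lt (B * 0)); [exact: cvgMl_tmp | rewrite mulr0].
have [N _ sN] : \forall n \near \oo, series g n.+1 = p.
  apply: filterS remainder_small => n small; apply/esym/eqP; rewrite -subr_eq0.
  have /eqP := int_norm_lt1_eq0 (remainder_int n) (le_lt_trans (remainder_le n) small).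
  by rewrite mulf_eq0 expf_eq0 pnatr_eq0 andbF.
exists N => -[//|n] Nn.
have := seriesSB g n.+1; rewrite (sN n.+1 (leqW Nn)) (sN n Nn) subrr => /esym/eqP.
by rewrite mulf_eq0 invr_eq0 expf_eq0 pnatr_eq0 andbF orbF => /eqP.
Qed.

End LacunarySeries.

Lemma is_cvg_series_mask (R : realType) (alpha : nat -> R) (p : pred nat) :
  (forall n, 0 <= alpha n) -> cvgn (series alpha) ->
  cvgn (series (fun n => if p n then alpha n else 0)).
Proof. by move=> alpha_ge0; apply: series_le_cvg => // n; case: ifP. Qed.

Lemma cvg_series_pairing_sum (R : realType) (Q : nat -> rat) (alpha : nat -> R)
    (I : Type) (r : seq I) (B : I -> set rat) (w : I -> R) :
  (forall n, 0 <= alpha n) -> cvgn (series alpha) ->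
  series (fun n => (\sum_(i <- r) if Q n \in B i then w i else 0) * alpha n) @ \oo
    --> \sum_(i <- r) w i * pairing Q alpha (B i).
Proof.
move=> alpha_ge0 alpha_cvg.
have -> : series (fun n => (\sum_(i <- r) if Q n \in B i then w i else 0) * alpha n) =
    (fun N => \sum_(i <- r) w i * series (fun n => if Q n \in B i then alpha n else 0) N).
  apply/funext => N; rewrite /series /=.
  under eq_bigr do rewrite mulr_suml.
  rewrite exchange_big /=; apply: eq_bigr => i _; rewrite mulr_sumr.
  by apply: eq_bigr => n _; case: ifP; rewrite ?mul0r ?mulr0.
apply: cvg_big => [|i _]; first exact: add_continuous.
by apply: cvgMl_tmp; exact: is_cvg_series_mask.
Qed.

Lemma common_denominator (c : nat -> rat) (n : nat) :
  exists2 M : int, M != 0 & forall i, (i < n)%N -> M%:~R * c i \is a Num.int.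
Proof.
exists (\prod_(j < n) denq (c j)); first by apply/prodf_neq0 => j _; exact: denq_neq0.
move=> i lt_in; rewrite (bigD1 (Ordinal lt_in)) //= rmorphM mulrAC [_ * c i]mulrC.
by rewrite -numqE rpredM ?rpred_int.
Qed.

Lemma exists_index_in_itv {R : realType} {Q : nat -> rat} {x y : R} (N : nat) :
  (forall q : rat, 0 <= q -> exists i, Q i = q) -> 0 <= x -> x < y ->
  exists n, [/\ (N < n)%N, x < ratr (Q n) & ratr (Q n) < y].
Proof.
move=> Qsurj x_ge0 xy.
pose m := \big[Num.min/y]_(n < N.+1 | x < ratr (Q n)) ratr (Q n).
have xm : x < m by apply: lt_bigmin.
have [q] := rat_in_itvoo xm; rewrite in_itv /= => /andP[xq qm].
have [n Qn] : exists n, Q n = q by apply: Qsurj; rewrite -(ler0q R); exact: le_trans (ltW xq).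
exists n; split; rewrite ?Qn //; last by apply: lt_le_trans qm _; exact: bigmin_le_id.
rewrite ltnNge; apply/negP => nN.
have : m <= ratr (Q n).
  by apply: (bigmin_le_cond _ (j := Ordinal (nN : (n < N.+1)%N))); rewrite /= Qn.
by rewrite Qn leNgt qm.
Qed.

(* Among the indices with nonzero weight take [j0] with the largest [b j0]; a
   rational just below [b j0], beyond every other such [b j], lies in [S] and
   [P j0] but in no other weighted [P j]. *)
Lemma staircase_weights_eq0 {R : realType} {V : zmodType} {Q : nat -> rat}
    {k : nat} {S : set rat} {P : nat -> set rat} {a : R} {b : nat -> R}
    {w : nat -> V} {N : nat} :
  (forall q : rat, 0 <= q -> exists i, Q i = q) -> 0 <= a ->
  (forall i, (i <= k)%N -> a < b i) ->
  (forall i j, (i <= k)%N -> (j <= k)%N -> i != j -> b i != b j) ->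
  (forall i, (i <= k)%N ->
     S `&` P i = [set q : rat | 0 <= q /\ a <= ratr q /\ ratr q < b i]) ->
  (forall n, (N < n)%N -> \sum_(i < k.+1) (if Q n \in P i then w i else 0) = 0) ->
  forall i : 'I_k.+1, w i = 0.
Proof.
move=> Qsurj a_ge0 ab b_inj SP w_sum i0; apply: contrapT => /eqP wi0.
pose I := [pred i : 'I_k.+1 | w i != 0].
have [j0 Ij0 j0_max] := @arg_maxP _ _ _ i0 I (fun i => b i) wi0.
have j0k : (j0 <= k)%N by rewrite -ltnS.
pose L := \big[Num.max/a]_(j < k.+1 | I j && (j != j0)) b j.
have L_lt : L < b j0.
  apply: bigmax_lt => [|j /andP[Ij jj0]]; first exact: ab.
  by rewrite lt_neqAle (j0_max j Ij : b j <= b j0) andbT b_inj // -ltnS.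
have L_ge j : I j -> j != j0 -> b j <= L.
  by move=> Ij jj0; apply: (le_bigmax_cond _ (P := fun j => I j && (j != j0))); rewrite Ij.
have a_le_L : a <= L by exact: bigmax_ge_id.
have [n [Nn Lq qb]] := exists_index_in_itv N Qsurj (le_trans a_ge0 a_le_L) L_lt.
have Qn_j0 : (S `&` P j0) (Q n).
  rewrite SP //; split; first by rewrite -(ler0q R) (le_trans (le_trans a_ge0 a_le_L) (ltW Lq)).
  by split => //; exact: le_trans a_le_L (ltW Lq).
move: (w_sum n Nn); rewrite (bigD1 j0) //= (mem_set Qn_j0.2) big1 ?addr0.
  by move/eqP; rewrite (negbTE Ij0).
move=> j jj0; case: ifP => // /set_mem Qn_j; have [//|wj] := eqVneq (w j) 0.
have : (S `&` P j) (Q n) by split; [exact: Qn_j0.1 | exact: Qn_j].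
have jk : (j <= k)%N by rewrite -ltnS.
rewrite SP // => -[_ [_ qbj]].
by have := lt_trans (le_lt_trans (L_ge j wj jj0) Lq) qbj; rewrite ltxx.
Qed.

Theorem proposition3p3 (R : realType) (Q : nat -> rat) (F : nat -> nat)
  (k : nat) (P : nat -> set rat) (S : set rat) :
  nonneg_rat_bij Q ->
  in_calQ R F ->
  (forall i, (i <= k)%N -> P i `<=` [set q : rat | 0 <= q]) ->
  S `<=` [set q : rat | 0 <= q] ->
  (exists (a : R) (b : nat -> R),
      [/\ 0 <= a,
          (forall i, (i <= k)%N -> 0 <= b i),
          (forall i, (i <= k)%N -> a < b i),
          (forall i j, (i <= k)%N -> (j <= k)%N -> i != j -> b i != b j)
        & (forall i, (i <= k)%N ->
             S `&` P i = [set q : rat | 0 <= q /\ a <= ratr q /\ ratr q < b i])]) ->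
  forall c : nat -> rat,
    \sum_(i < k.+1) ratr (c i) * pairing Q (lambda_of R F) (P i) + ratr (c k.+1) = 0 ->
    forall i, (i <= k.+1)%N -> c i = 0.
Proof.
move=> [_ _ Qsurj] [F_incr _ F_tail] _ _ [a [b [a_ge0 _ ab b_inj SP]]] c c_rel.
have [M M_neq0 Mc_int] := common_denominator c k.+2.
pose w i : R := M%:~R * ratr (c i).
have w_int i : (i <= k.+1)%N -> w i \is a Num.int.
  by move=> ik; rewrite /w -(ratr_int R M) -rmorphM /= rpred_ratr_int ?Mc_int.
pose d n := \sum_(i < k.+1) if Q n \in P i then w i else 0.
have d_int n : d n \is a Num.int.
  by rewrite rpred_sum // => i _; case: ifP => _; rewrite ?rpred0 ?w_int // ltnW.
have d_le n : `|d n| <= \sum_(i < k.+1) `|w i|.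
  apply: le_trans (ler_norm_sum _ _ _) _; apply: ler_sum => i _.
  by case: ifP; rewrite ?normr0.
have d_series : series (fun n => d n * lambda_of R F n) @ \oo --> - w k.+1.
  have -> : - w k.+1 = \sum_(i < k.+1) w i * pairing Q (lambda_of R F) (P i).
    move/eqP: c_rel; rewrite addr_eq0 => /eqP sum_c.
    by rewrite /w -mulrN -sum_c mulr_sumr; apply: eq_bigr => i _; rewrite mulrA.
  by rewrite /d; apply: cvg_series_pairing_sum; [exact: lambda_ge0 | exact: is_cvg_series_lambda].
have limit_int : - w k.+1 \is a Num.int by rewrite rpredN w_int.
have [N dN] := lacunary_int_series_eventually0 F_incr (calQ_tail_cvg0 F_incr F_tail)
  d_int d_le limit_int d_series.
have w0 := staircase_weights_eq0 Qsurj a_ge0 ab b_inj SP dN.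
have c0 i : (i <= k)%N -> c i = 0.
  move=> ik; have /eqP := w0 (Ordinal (ik : (i < k.+1)%N)).
  by rewrite mulf_eq0 intr_eq0 (negbTE M_neq0) fmorph_eq0 => /eqP.
move=> i; rewrite leq_eqVlt => /orP[/eqP -> | ]; last exact: c0.
move: c_rel; rewrite big1 ?add0r => [/eqP | j _]; first by rewrite fmorph_eq0 => /eqP.
by rewrite c0 ?rmorph0 ?mul0r // -ltnS.
Qed.
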